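(* Let $L=K$, let ${\bf X}$ and ${\bf Z}$ be real $n\times K$ matrices, ${\bf D_X},{\bf D_Z}$ diagonal $K\times K$ matrices, $\Psi_n=\frac1n{\bf D_Z}{\bf Z}^T{\bf X}{\bf D_X}$, $c\in(0,1)$ and $J\subseteq\{1,\dots,K\}$ nonempty. Suppose that for some $\widetilde\kappa>0$ $$\inf_{\Delta\in C_J\setminus\{0\}}\frac{|{\bf X}{\bf D_X}\Delta|_2}{\sqrt n\,|\Delta_J|_2}\ge\widetilde\kappa,$$ and that for some $0<\eta<1$ $$\Big|\frac1n\big({\bf X}{\bf D_X}-{\bf Z}{\bf D_Z}\big)^T{\bf X}{\bf D_X}\Big|_\infty\le\frac{\eta(1-c)^2\widetilde\kappa^2}{4|J|},$$ where for a matrix $|\cdot|_\infty$ denotes the maximal absolute entry. Then $$\kappa_{1,J}\ge\frac{(1-\eta)(1-c)^2\widetilde\kappa^2}{4|J|}.$$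
   Context: $\Delta_J$ zeroes coordinates outside $J$, $J^c$ complement, $|\cdot|_p$ the $\ell_p$ norm of a vector. $C_J=\{\Delta\in\mathbb R^K:|\Delta_{J^c}|_1\le\frac{1+c}{1-c}|\Delta_J|_1\}$; $\kappa_{1,J}=\inf\{|\Psi_n\Delta|_\infty:\Delta\in C_J,|\Delta|_1=1\}$. In the paper ${\bf D_X}={\rm diag}(x_{k*}^{-1})$ and ${\bf D_Z}={\rm diag}(z_{l*}^{-1})$ with $x_{k*},z_{l*}$ the maximal absolute entries of the columns of ${\bf X},{\bf Z}$. *)

(* R : rcfType (needed for Num.sqrt). *)
From HB Require Import structures.
From mathcomp Require Import all_boot all_order all_algebra.
Set Implicit Arguments. Unset Strict Implicit. Unset Printing Implicit Defensive.
Import Order.TTheory GRing.Theory Num.Theory.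
Local Open Scope ring_scope.

(* Delta_J : zero the coordinates outside J *)
Definition restrict (R : rcfType) (K : nat) (J : {set 'I_K}) (v : 'cV[R]_K) : 'cV[R]_K :=
  \col_i (if i \in J then v i 0 else 0).

Definition norm1 (R : rcfType) (K : nat) (v : 'cV[R]_K) : R := \sum_i `|v i 0|.
Definition norm2 (R : rcfType) (K : nat) (v : 'cV[R]_K) : R :=
  Num.sqrt (\sum_i (v i 0) ^+ 2).

(* maximal absolute entry of a matrix (also the l_infty norm of a column vector) *)
Definition normInf (R : rcfType) (m p : nat) (A : 'M[R]_(m, p)) : R :=
  \big[Num.max/0]_(i < m) \big[Num.max/0]_(j < p) `|A i j|.

Definition in_cone (R : rcfType) (K : nat) (c : R) (J : {set 'I_K}) (v : 'cV[R]_K) : Prop :=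
  norm1 (restrict (~: J) v) <= (1 + c) / (1 - c) * norm1 (restrict J v).

Definition Psi (R : rcfType) (n K : nat) (X Z : 'M[R]_(n, K)) (DX DZ : 'M[R]_K) : 'M[R]_K :=
  (n%:R)^-1 *: (DZ *m Z^T *m X *m DX).

From HB Require Import structures.
From mathcomp Require Import all_boot all_order all_algebra.
From mathcomp Require Import ring lra.
Import Order.TTheory GRing.Theory Num.Theory.
Set Implicit Arguments. Unset Strict Implicit.
Local Open Scope ring_scope.

(* Write A = X D_X, B = Z D_Z and G = A^T A / n.  Since D_Z is diagonal, hence
   symmetric, Psi_n = G - E with E = (A - B)^T A / n the error matrix.
   For Delta in C_J with |Delta|_1 = 1 we test Psi_n Delta against Delta:
   - Hoelder:   <Delta, Psi_n Delta> <= |Psi_n Delta|_inf |Delta|_1,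
   - quadratic-form bound:  <Delta, E Delta> <= |E|_inf |Delta|_1^2,
   - Gram identity:  <Delta, G Delta> = |A Delta|_2^2 / n,
   - the compatibility condition bounds |A Delta|_2^2 / n from below by
     kt^2 |Delta_J|_2^2, and the cone condition together with Cauchy-Schwarz
     gives (1 - c)^2 |Delta|_1^2 <= 4 |J| |Delta_J|_2^2.
   Hence |Psi_n Delta|_inf >= <Delta, G Delta> - <Delta, E Delta>
   >= (1 - c)^2 kt^2 / (4 |J|) - |E|_inf, and the assumption on |E|_inf
   concludes. *)

Section Norms.
Variable R : rcfType.

Definition dot (K : nat) (v w : 'cV[R]_K) : R := \sum_i v i 0 * w i 0.

Lemma dotB K (u v w : 'cV[R]_K) : dot u (v - w) = dot u v - dot u w.
Proof. by rewrite /dot -sumrB; apply: eq_bigr => i _; rewrite !mxE mulrBr. Qed.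

Lemma dotZ K (u w : 'cV[R]_K) a : dot u (a *: w) = a * dot u w.
Proof. by rewrite /dot mulr_sumr; apply: eq_bigr => i _; rewrite mxE mulrCA. Qed.

Lemma normInf_ge m p (M : 'M[R]_(m, p)) i j : `|M i j| <= normInf M.
Proof.
apply: le_trans (le_bigmax 0 (fun i => \big[Num.max/0]_(j < p) `|M i j|) i).
exact: le_bigmax.
Qed.

Lemma dot_le_normInf K (v w : 'cV[R]_K) : dot v w <= normInf w * norm1 v.
Proof.
rewrite /dot /norm1 mulr_sumr; apply: ler_sum => i _.
apply: le_trans (ler_norm _) _; rewrite normrM mulrC.
by apply: ler_wpM2r => //; apply: normInf_ge.
Qed.

Lemma quadratic_form_le K (M : 'M[R]_K) (u : 'cV[R]_K) :
  dot u (M *m u) <= normInf M * norm1 u ^+ 2.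
Proof.
rewrite expr2 mulrA /dot /norm1 [_ * \sum__ _]mulr_sumr; apply: ler_sum => i _.
apply: le_trans (ler_norm _) _; rewrite normrM mulrC mxE.
apply: ler_wpM2r => //; apply: le_trans (ler_norm_sum _ _ _) _.
rewrite mulr_sumr; apply: ler_sum => j _.
by rewrite normrM; apply: ler_wpM2r => //; apply: normInf_ge.
Qed.

Lemma norm2_sqr K (v : 'cV[R]_K) : norm2 v ^+ 2 = \sum_i v i 0 ^+ 2.
Proof. by rewrite /norm2 sqr_sqrtr //; apply: sumr_ge0 => i _; apply: sqr_ge0. Qed.

Lemma dot_gram n K (A : 'M[R]_(n, K)) (u : 'cV[R]_K) :
  dot u (A^T *m (A *m u)) = norm2 (A *m u) ^+ 2.
Proof.
have -> : dot u (A^T *m (A *m u)) = (u^T *m (A^T *m (A *m u))) 0 0.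
  rewrite /dot [in RHS]mxE; apply: eq_bigr => i _; congr (_ * _).
  by rewrite mxE.
rewrite mulmxA -trmx_mul norm2_sqr [in LHS]mxE; apply: eq_bigr => i _.
by rewrite [X in X * _]mxE expr2.
Qed.

(* Cauchy-Schwarz against the constant vector 1_J, proved through the
   nonnegativity of \sum_(i, j in J) (f i - f j)^2. *)
Lemma sum_sqr_le (I : finType) (J : {set I}) (f : I -> R) :
  (\sum_(i in J) f i) ^+ 2 <= #|J|%:R * \sum_(i in J) f i ^+ 2.
Proof.
have H : 0 <= \sum_(i in J) \sum_(j in J) (f i - f j) ^+ 2.
  by apply: sumr_ge0 => i _; apply: sumr_ge0 => j _; apply: sqr_ge0.
have expand : \sum_(i in J) \sum_(j in J) (f i - f j) ^+ 2
   = (#|J|%:R * \sum_(i in J) f i ^+ 2) *+ 2 - (\sum_(i in J) f i) ^+ 2 *+ 2.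
  rewrite (eq_bigr (fun i => \sum_(j in J) f i ^+ 2 - (f i * \sum_(j in J) f j) *+ 2
      + \sum_(j in J) f j ^+ 2)); last first.
    move=> i _; rewrite mulr_sumr -sumrMnl -sumrB -big_split.
    by apply: eq_bigr => j _; apply: sqrrB.
  rewrite big_split sumrB /= !sumr_const sumrMnl -mulr_suml.
  under eq_bigr do rewrite sumr_const.
  by rewrite sumrMnl; ring.
by rewrite expand subr_ge0 ler_pMn2r in H.
Qed.

Lemma norm1_split K (J : {set 'I_K}) (u : 'cV[R]_K) :
  norm1 u = norm1 (restrict J u) + norm1 (restrict (~: J) u).
Proof.
rewrite /norm1 -big_split; apply: eq_bigr => i _; rewrite !mxE inE.
by case: (i \in J); rewrite /= normr0 ?addr0 ?add0r.
Qed.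

Lemma norm1_restrict_sqr K (J : {set 'I_K}) (u : 'cV[R]_K) :
  norm1 (restrict J u) ^+ 2 <= #|J|%:R * norm2 (restrict J u) ^+ 2.
Proof.
have -> : norm1 (restrict J u) = \sum_(i in J) `|u i 0|.
  rewrite /norm1 [RHS]big_mkcond; apply: eq_bigr => i _; rewrite !mxE.
  by case: (i \in J); rewrite ?normr0.
have -> : norm2 (restrict J u) ^+ 2 = \sum_(i in J) `|u i 0| ^+ 2.
  rewrite norm2_sqr [RHS]big_mkcond; apply: eq_bigr => i _; rewrite !mxE.
  by case: (i \in J); rewrite ?expr0n ?real_normK ?num_real.
exact: (sum_sqr_le J (fun i => `|u i 0|)).
Qed.

Lemma cone_norm1_restrict K (c : R) (J : {set 'I_K}) (u : 'cV[R]_K) :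
  c < 1 -> in_cone c J u -> (1 - c) * norm1 u <= 2 * norm1 (restrict J u).
Proof.
rewrite /in_cone (norm1_split J u) => c1.
set a := norm1 (restrict J u); set b := norm1 (restrict (~: J) u).
by rewrite mulrAC ler_pdivlMr ?subr_gt0 // => hb; lra.
Qed.

Lemma cone_norm2_restrict K (c : R) (J : {set 'I_K}) (u : 'cV[R]_K) :
  c < 1 -> in_cone c J u ->
  (1 - c) ^+ 2 * norm1 u ^+ 2 <= 4 * #|J|%:R * norm2 (restrict J u) ^+ 2.
Proof.
move=> c1 hu; have hJ := cone_norm1_restrict c1 hu.
have hcs := norm1_restrict_sqr J u.
have u0 : 0 <= norm1 u by apply: sumr_ge0.
have : 0 <= (1 - c) * norm1 u by rewrite mulr_ge0 // subr_ge0 ltW.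
by nra.
Qed.

Lemma diag_trmx K (D : 'M[R]_K) : is_diag_mx D -> D^T = D.
Proof.
move=> /is_diag_mxP dD; apply/matrixP => i j; rewrite mxE.
by case: (eqVneq i j) => [-> //|ne]; rewrite !dD // eq_sym.
Qed.

Lemma gram_form_ge n K (A : 'M[R]_(n, K)) (u : 'cV[R]_K) (kt r : R) :
  (0 < n)%N -> 0 <= kt -> 0 < r ->
  kt <= norm2 (A *m u) / (Num.sqrt n%:R * r) ->
  kt ^+ 2 * r ^+ 2 <= dot u ((n%:R)^-1 *: (A^T *m A) *m u).
Proof.
move=> n0 kt0 r0; have n0R : 0 < n%:R :> R by rewrite ltr0n.
rewrite ler_pdivlMr ?mulr_gt0 ?sqrtr_gt0 // => hkt.
rewrite -scalemxAl dotZ -mulmxA dot_gram ler_pdivlMl //.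
have w0 : 0 <= norm2 (A *m u) by apply: sqrtr_ge0.
have : (kt * (Num.sqrt n%:R * r)) ^+ 2 <= norm2 (A *m u) ^+ 2.
  by rewrite ler_pXn2r // nnegrE ?mulr_ge0 ?sqrtr_ge0 // ltW.
by rewrite !exprMn (sqr_sqrtr (ltW n0R)) mulrCA mulrA.
Qed.

Lemma Psi_split n K (X Z : 'M[R]_(n, K)) (DX DZ : 'M[R]_K) :
  is_diag_mx DZ ->
  Psi X Z DX DZ = (n%:R)^-1 *: ((X *m DX)^T *m (X *m DX))
                  - (n%:R)^-1 *: ((X *m DX - Z *m DZ)^T *m (X *m DX)).
Proof.
move=> /diag_trmx DZT; rewrite /Psi -scalerBr -mulmxBl.
have -> : (X *m DX)^T - (X *m DX - Z *m DZ)^T = (Z *m DZ)^T.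
  by rewrite linearB /= opprB addrC subrK.
by rewrite trmx_mul DZT !mulmxA.
Qed.

End Norms.

Theorem proposition4 (R : rcfType) (n K : nat) (X Z : 'M[R]_(n, K))
  (DX DZ : 'M[R]_K) (c : R) (J : {set 'I_K}) (kt eta : R) :
  (0 < n)%N ->
  is_diag_mx DX -> is_diag_mx DZ ->
  0 < c -> c < 1 ->
  J != set0 ->
  0 < kt ->
  (* inf over C_J \ {0} of |X D_X Delta|_2 / (sqrt n |Delta_J|_2) >= kt *)
  (forall Delta : 'cV[R]_K, in_cone c J Delta -> Delta != 0 ->
     kt <= norm2 (X *m DX *m Delta) / (Num.sqrt n%:R * norm2 (restrict J Delta))) ->
  0 < eta -> eta < 1 ->
  normInf ((n%:R)^-1 *: ((X *m DX - Z *m DZ)^T *m (X *m DX)))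
    <= eta * (1 - c) ^+ 2 * kt ^+ 2 / (4 * #|J|%:R) ->
  (* kappa_{1,J} = inf {|Psi_n Delta|_infty : Delta in C_J, |Delta|_1 = 1} >= bound *)
  forall Delta : 'cV[R]_K, in_cone c J Delta -> norm1 Delta = 1 ->
    (1 - eta) * (1 - c) ^+ 2 * kt ^+ 2 / (4 * #|J|%:R)
      <= normInf (Psi X Z DX DZ *m Delta).
Proof.
move=> n0 _ dZ _ c1 J0 kt0 compat _ _ hE u cone u1.
set t := (1 - c) ^+ 2 * kt ^+ 2 / (4 * #|J|%:R).
set r := norm2 (restrict J u).
have hJ : (1 - c) ^+ 2 <= 4 * #|J|%:R * r ^+ 2.
  by have := cone_norm2_restrict c1 cone; rewrite u1 expr1n mulr1.
have c2 : 0 < (1 - c) ^+ 2 by rewrite exprn_gt0 // subr_gt0.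
have r0 : 0 < r.
  rewrite lt0r sqrtr_ge0 andbT; apply: contraTneq hJ => ->.
  by rewrite expr0n mulr0 -ltNge.
have J4 : 0 < 4 * #|J|%:R :> R by rewrite mulr_gt0 // ltr0n card_gt0.
have t_le : t <= kt ^+ 2 * r ^+ 2 by rewrite /t ler_pdivrMr //; nra.
have u0 : u != 0.
  apply: contra_eq_neq u1 => ->; rewrite /norm1 big1 => [|i _].
    by rewrite eq_sym oner_neq0.
  by rewrite mxE normr0.
have gram_ge := gram_form_ge n0 (ltW kt0) r0 (compat u cone u0).
have err_le := quadratic_form_le ((n%:R)^-1 *: ((X *m DX - Z *m DZ)^T *m (X *m DX))) u.
rewrite u1 expr1n mulr1 in err_le.
have holder := dot_le_normInf u (Psi X Z DX DZ *m u).
rewrite u1 mulr1 [in dot _ _]Psi_split // mulmxBl dotB in holder.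
have eta_t : eta * (1 - c) ^+ 2 * kt ^+ 2 / (4 * #|J|%:R) = eta * t.
  by rewrite /t; ring.
have -> : (1 - eta) * (1 - c) ^+ 2 * kt ^+ 2 / (4 * #|J|%:R) = t - eta * t.
  by rewrite /t; ring.
rewrite eta_t in hE; lra.
Qed.
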